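(* Let $\mathcal S$ be a trajectory set satisfying (LOP) and (K). Then $\mathcal L^1_{(K)}$ is a vector space containing $\mathcal E$, and $\int_{(K)}:\mathcal L^1_{(K)}\to\mathbb R$ is a linear, positive, constant-preserving extension of $I$ which satisfies: if $f,f_n\in\mathcal L^1_{(K)}$ and $\lim_{n\to\infty}\|f_n-f\|=0$, then $\lim_{n\to\infty}\int_{(K)}f_n=\int_{(K)}f$. Moreover, $\int_{(K)}$ is strictly positive: if $f,g\in\mathcal L^1_{(K)}$ satisfy $f\ge g$ almost everywhere and $\int_{(K)}f=\int_{(K)}g$, then $f=g$ almost everywhere.
   Context: Fix $s_0\in\mathbb R$. A trajectory set is any set $\mathcal S$ of real sequences $S=(S_j)_{j\in\mathbb N_0}$ with $S_0=s_0$. A simple portfolio $(V,n,H)$ consists of $V\in\mathbb R$, $n\in\mathbb N$ and nonanticipating functions $H_i:\mathcal S\to\mathbb R$, $0\le i\le n-1$ (i.e. $H_i(S)=h_i(S_0,\dots,S_i)$ for some arbitrary $h_i:\mathbb R^{i+1}\to\mathbb R$). Its wealth is $\Pi^{V,n,H}_j(S)=V+\sum_{i=0}^{\min\{j,n\}-1}H_i(S)(S_{i+1}-S_i)$ and $\Pi^{V,n,H}_\infty:=\Pi^{V,n,H}_n$; it is positive if $V\ge0$ and $\Pi^{V,n,H}_\infty\ge0$ on $\mathcal S$. A generalized portfolio is a sequence $(V_m,n_m,H_m)_{m\in\mathbb N_0}$ of simple portfolios, positive for every $m\ge1$; it is a positive generalized portfolio if moreover $\Pi^{V_0,n_0,H_0}_j\equiv0$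 for all $j$. A map $f:\mathcal S\to[-\infty,+\infty]$ is superhedged with initial endowment $V=\sum_{m=0}^\infty V_m\in(-\infty,+\infty]$ by such a portfolio if $f\le\sum_{m=0}^\infty\Pi^{V_m,n_m,H_m}_\infty$ on $\mathcal S$. For $f\ge0$, $\bar I(f)$ is the infimum of initial endowments of positive generalized portfolios superhedging $f$; $\bar\sigma(f)$ is the infimum of initial endowments of generalized portfolios superhedging $f$. Let $\mathcal E=\{\Pi^{V,n,H}_\infty\}$ over all simple portfolios. (LOP): whenever two simple portfolios have equal terminal wealth $\Pi_\infty$ at every $S\in\mathcal S$, their initial endowments coincide; under (LOP), $I:\mathcal E\to\mathbb R$, $I(\Pi^{V,n,H}_\infty)=V$, is well defined and linear. (K): $I(f)+\bar I(f^-)\le\bar I(f^+)$ for every $f\in\mathcal E$. Define $\|f\|:=\bar I(|f|)$; null functions are $f$ with $\|f\|=0$, null sets are $A\subseteq\mathcal S$ with $\|\mathbf 1_A\|=0$, and ''almost everywhere'' means outside a null set. Let $\underline\sigma(f)=-\bar\sigma(-f)$, let $\mathcal L^1_{(K)}$ be the set of real-valued financial positions $f$ with $\underline\sigma(f)=\bar\sigma(f)\in\mathbb R$, and set $\int_{(K)}f:=\bar\sigma(f)$ for $f\in\mathcal L^1_{(K)}$. Positive means $f\ge0$ implies $\int_{(K)}f\ge0$; constant-preserving means $\int_{(K)}c=c$ for constants $c$. *)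

From HB Require Import structures.
From mathcomp Require Import all_boot all_order all_algebra.
From mathcomp Require Import all_classical all_reals all_analysis.
Set Implicit Arguments. Unset Strict Implicit. Unset Printing Implicit Defensive.
Import Order.TTheory GRing.Theory Num.Theory.
Local Open Scope classical_set_scope.
Local Open Scope ring_scope.

Section Defs.
Variable R : realType.

Definition traj := nat -> R.

Definition trajectory_set (s0 : R) (TS : set traj) : Prop :=
  forall S, TS S -> S 0%N = s0.

Definition nonanticipating (i : nat) (h : traj -> R) : Prop :=
  forall S S' : traj, (forall j, (j <= i)%N -> S j = S' j) -> h S = h S'.

Record simple_portfolio := SimplePortfolio {
  sp_V : R;
  sp_n : nat;
  sp_H : nat -> traj -> R;
  sp_na : forall i, (i < sp_n)%N -> nonanticipating i (sp_H i) }.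

Definition wealth (p : simple_portfolio) (j : nat) (S : traj) : R :=
  sp_V p + \sum_(0 <= i < minn j (sp_n p)) sp_H p i S * (S i.+1 - S i).

Definition twealth (p : simple_portfolio) (S : traj) : R := wealth p (sp_n p) S.

Definition positive_sp (TS : set traj) (p : simple_portfolio) : Prop :=
  0 <= sp_V p /\ forall S, TS S -> 0 <= twealth p S.

Definition gen_portfolio (TS : set traj) (P : nat -> simple_portfolio) : Prop :=
  forall m, (1 <= m)%N -> positive_sp TS (P m).

Definition pos_gen_portfolio (TS : set traj) (P : nat -> simple_portfolio) : Prop :=
  gen_portfolio TS P /\ forall j S, TS S -> wealth (P 0%N) j S = 0.

Local Open Scope ereal_scope.

Definition endowment (P : nat -> simple_portfolio) : \bar R :=
  (sp_V (P 0%N))%:E + \sum_(1 <= m <oo) (sp_V (P m))%:E.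

Definition superhedges (TS : set traj) (P : nat -> simple_portfolio)
    (f : traj -> \bar R) : Prop :=
  forall S, TS S ->
    f S <= (twealth (P 0%N) S)%:E + \sum_(1 <= m <oo) (twealth (P m) S)%:E.

Definition Ibar (TS : set traj) (f : traj -> \bar R) : \bar R :=
  ereal_inf [set V | exists P, pos_gen_portfolio TS P /\ superhedges TS P f
                               /\ V = endowment P].

Definition sigmabar (TS : set traj) (f : traj -> \bar R) : \bar R :=
  ereal_inf [set V | exists P, gen_portfolio TS P /\ superhedges TS P f
                               /\ V = endowment P].

Definition sigmaund (TS : set traj) (f : traj -> \bar R) : \bar R :=
  - sigmabar TS (fun S => - f S).

Definition LOP (TS : set traj) : Prop :=
  forall p q, (forall S, TS S -> twealth p S = twealth q S) -> sp_V p = sp_V q.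

(* (K): I(f) + \bar I(f^-) <= \bar I(f^+) for f = Pi_infty in E, I(f) = V. *)
Definition condK (TS : set traj) : Prop :=
  forall p : simple_portfolio,
    (sp_V p)%:E + Ibar TS (fun S => (Num.max (- twealth p S) 0%R)%:E)
      <= Ibar TS (fun S => (Num.max (twealth p S) 0%R)%:E).

Definition normK (TS : set traj) (f : traj -> R) : \bar R :=
  Ibar TS (fun S => (`|f S|)%:E).

Definition null_set (TS : set traj) (A : set traj) : Prop :=
  Ibar TS (fun S => (\1_A S : R)%:E) = 0.

Definition ae (TS : set traj) (Q : traj -> Prop) : Prop :=
  exists A, null_set TS A /\ forall S, TS S -> ~ A S -> Q S.

Definition L1K (TS : set traj) (f : traj -> R) : Prop :=
  exists r : R, sigmabar TS (fun S => (f S)%:E) = r%:E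
             /\ sigmaund TS (fun S => (f S)%:E) = r%:E.

Definition intK (TS : set traj) (f : traj -> R) : R :=
  fine (sigmabar TS (fun S => (f S)%:E)).

End Defs.

From HB Require Import structures.
From mathcomp Require Import all_boot all_order all_algebra.
From mathcomp Require Import all_classical all_reals all_analysis.
From mathcomp Require Import zify lra.
Set Implicit Arguments. Unset Strict Implicit. Unset Printing Implicit Defensive.
Import Order.TTheory GRing.Theory Num.Theory numFieldNormedType.Exports.
Local Open Scope classical_set_scope.
Local Open Scope ring_scope.

(* The heart of the matter is that under (K) a generalized portfolio with
   nonnegative total terminal wealth has nonnegative initial endowment: apply
   (K) to the negative of its 0-th portfolio, noting that the negative part of
   the 0-th wealth is superhedged by the remaining (positive) portfolios.
   Hence the superhedging price sigmabar is nonnegative on nonnegative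
   positions; as it is also subadditive and positively homogeneous, sigmaund
   <= sigmabar, and sigmabar is linear, positive and 1-Lipschitz for ||.|| on
   L^1_(K). Refining the same estimate, after merging a long initial segment
   of the portfolios into the 0-th one, gives Ibar = sigmabar on nonnegative
   positions. Strict positivity then follows from the countable subadditivity
   of Ibar: if h >= 0 a.e. and int h = 0, the indicator of {h <> 0} is
   dominated, up to a null set, by the series sum_k h, whose Ibar is sum_k 0. *)

Section SimplePortfolio.
Variable R : realType.
Implicit Types (p q : simple_portfolio R) (S : traj R).

Lemma wealth0 p S : wealth p 0 S = sp_V p.
Proof. by rewrite /wealth min0n big_geq // addr0. Qed.

Lemma wealth_stopped p j S : (sp_n p <= j)%N -> wealth p j S = twealth p S.
Proof. by move=> nj; rewrite /twealth /wealth (minn_idPr nj) minnn. Qed.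

(* [sp_H p i] is unconstrained junk for [i >= sp_n p]; it must be zeroed before
   portfolios with different horizons are added. *)
Definition masked_strategy p i S := if (i < sp_n p)%N then sp_H p i S else 0.

Lemma masked_strategy_na p i : nonanticipating i (masked_strategy p i).
Proof. by move=> S S' eqS; rewrite /masked_strategy; case: ifP => // ip; exact: sp_na. Qed.

Lemma sum_masked_strategy p N S :
  \sum_(0 <= i < N) masked_strategy p i S * (S i.+1 - S i) =
  \sum_(0 <= i < minn N (sp_n p)) sp_H p i S * (S i.+1 - S i).
Proof.
rewrite (@big_cat_nat _ _ _ (minn N (sp_n p)) 0 N _ _ (leq0n _) (geq_minl N _)) /=.
rewrite [X in _ + X]big_nat_cond [X in _ + X]big1 ?addr0; last first.
  by move=> i /andP[/andP[ni iN] _]; rewrite /masked_strategy ifN ?mul0r // -leqNgt; lia.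
by apply: eq_big_nat => i /andP[_ iN]; rewrite /masked_strategy ifT //; lia.
Qed.

Definition spD p q := @SimplePortfolio R (sp_V p + sp_V q) (maxn (sp_n p) (sp_n q))
  (fun i S => masked_strategy p i S + masked_strategy q i S)
  (fun i _ S S' eqS =>
     congr2 +%R (@masked_strategy_na p i S S' eqS) (@masked_strategy_na q i S S' eqS)).

Lemma wealthD p q j S : wealth (spD p q) j S = wealth p j S + wealth q j S.
Proof.
rewrite /wealth /=; under eq_bigr do rewrite mulrDl.
rewrite big_split /= !sum_masked_strategy addrACA.
have -> : minn (minn j (maxn (sp_n p) (sp_n q))) (sp_n p) = minn j (sp_n p) by lia.
by have -> : minn (minn j (maxn (sp_n p) (sp_n q))) (sp_n q) = minn j (sp_n q) by lia.
Qed.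

Lemma twealthD p q S : twealth (spD p q) S = twealth p S + twealth q S.
Proof. by rewrite /twealth wealthD !wealth_stopped //= ?leq_maxl ?leq_maxr. Qed.

Definition spZ (c : R) p := @SimplePortfolio R (c * sp_V p) (sp_n p)
  (fun i S => c * sp_H p i S)
  (fun i ip S S' eqS => congr1 ( *%R c) (sp_na ip eqS)).

Lemma twealthZ c p S : twealth (spZ c p) S = c * twealth p S.
Proof.
rewrite /twealth /wealth /= mulrDr mulr_sumr.
by congr (_ + _); apply: eq_bigr => i _; rewrite mulrA.
Qed.

Definition spN p := spZ (-1) p.

Lemma twealthN p S : twealth (spN p) S = - twealth p S.
Proof. by rewrite twealthZ mulN1r. Qed.

Lemma spN_V p : sp_V (spN p) = - sp_V p.
Proof. exact: mulN1r. Qed.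

Definition spC (c : R) := @SimplePortfolio R c 0 (fun _ _ => 0) (fun i i0 => ltac:(by [])).

Lemma wealth_cst c j S : wealth (spC c) j S = c.
Proof. by rewrite /wealth /= minn0 big_geq // addr0. Qed.

Lemma twealth_cst c S : twealth (spC c) S = c.
Proof. exact: wealth_cst. Qed.

End SimplePortfolio.

Section ExtendedSeries.
Variable R : realType.
Local Open Scope ereal_scope.
Implicit Types a b : nat -> \bar R.

Lemma eq_eseries_from N a b : (forall m, (N <= m)%N -> a m = b m) ->
  \sum_(N <= m <oo) a m = \sum_(N <= m <oo) b m.
Proof.
by move=> ab; rewrite eseries_cond [RHS]eseries_cond; apply: eq_eseriesr => m /andP[_]; exact: ab.
Qed.

Lemma nneseries_shift1 a : (forall m, (0 < m)%N -> 0 <= a m) ->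
  \sum_(1 <= m <oo) a m = \sum_(j <oo) a j.+1.
Proof.
move=> a0; pose a' m := if m is 0%N then 0 else a m.
have a'0 m : 0 <= a' m by case: m => [|m] //=; exact: a0.
rewrite (@eq_eseries_from 1 a a') => [|[|m] //].
by rewrite -nneseries_addn //; apply: eq_eseriesr => j _; rewrite addn1.
Qed.

Lemma nneseries_pair_bij (phi : nat -> nat * nat) (b : nat -> nat -> \bar R) :
  set_bij [set: nat] [set: nat * nat] phi -> (forall k i, 0 <= b k i) ->
  \sum_(j <oo) b (phi j).1 (phi j).2 = \sum_(k <oo) \sum_(i <oo) b k i.
Proof.
move=> phi_bij b0; rewrite nneseries_esumT; last by move=> j.
rewrite -(@reindex_esum _ _ _ [set: nat] [set: nat * nat] phi (fun z => b z.1 z.2)) //.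
rewrite nneseries_esumT; last by move=> k; exact: nneseries_ge0.
rewrite (_ : [set: nat * nat] = [set: nat] `*`` (fun=> [set: nat])); last first.
  by apply/seteqP; split.
rewrite -(@esum_esum _ _ _ [set: nat] (fun=> [set: nat]) b) //.
by apply: eq_esum => k _; rewrite nneseries_esumT.
Qed.

Lemma nneseries_cst_pinfty (c : R) : (0 < c)%R -> \sum_(k <oo) c%:E = +oo.
Proof.
move=> c0; have ge r : r%:E <= \sum_(k <oo) c%:E.
  apply: le_trans (nneseries_lim_ge (Num.bound `|r / c|%R) _); last first.
    by move=> k _ _; rewrite lee_fin ltW.
  rewrite sumEFin lee_fin sumr_const_nat subn0 -mulr_natl -ler_pdivrMr //.
  by rewrite (le_trans (ler_norm _)) // ltW // archi_boundP.
move: (\sum_(k <oo) _) ge => [r| |] ge //; last by have := ge 0%R.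
by have := ge (r + 1)%R; rewrite lee_fin gerDl ler10.
Qed.

Lemma nneseries_tail_lt a (e : R) : (forall m, (0 < m)%N -> 0 <= a m) ->
  \sum_(1 <= m <oo) a m < +oo -> (0 < e)%R ->
  exists n, \sum_(n.+1 <= m <oo) a m < e%:E.
Proof.
move=> a0 fin_a e0.
have tail_cvg : \sum_(N <= m <oo | (0 < m)%N) a m @[N --> \oo] --> 0.
  apply: nneseries_tail_cvg => //.
  by rewrite [X in X < _](_ : _ = \sum_(1 <= m <oo) a m) // [RHS]eseries_cond.
have e0' : (0 : \bar R) < e%:E by rewrite lte_fin.
have [N _ tail_lt] := tail_cvg _ (open_ereal_lt' e0').
exists N; rewrite (eseries_cond _ _ N.+1) (@eq_eseriesl _ _ (fun m => (0 < m)%N && (N < m)%N)).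
  by rewrite -eseries_cond; exact: (tail_lt N.+1 (leqnSn N)).
by case.
Qed.

End ExtendedSeries.

Section PortfolioSequence.
Variable R : realType.
Local Open Scope ereal_scope.
Implicit Types (P : nat -> simple_portfolio R) (p : simple_portfolio R).
Variable F : simple_portfolio R -> R.

(* The initial endowment and the terminal wealth at a fixed trajectory of a
   generalized portfolio both have this form. *)
Definition gsum P := (F (P 0%N))%:E + \sum_(1 <= m <oo) (F (P m))%:E.

Definition tail_ge0 P := forall m, (0 < m)%N -> (0 <= F (P m))%R.

Lemma tail_sum_ge0 P : tail_ge0 P -> 0 <= \sum_(1 <= m <oo) (F (P m))%:E.
Proof. by move=> P0; apply: nneseries_ge0 => m m1 _; rewrite lee_fin P0. Qed.

Hypothesis FD : forall p q, F (spD p q) = (F p + F q)%R.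
Hypothesis FZ : forall c p, F (spZ c p) = (c * F p)%R.
Hypothesis F0 : F (spC 0) = 0%R.

Definition gpD P Q m := spD (P m) (Q m).

Lemma gsumD P Q : tail_ge0 P -> tail_ge0 Q -> gsum (gpD P Q) = gsum P + gsum Q.
Proof.
move=> P0 Q0; rewrite /gsum /gpD FD EFinD; under eq_eseriesr do rewrite FD EFinD.
rewrite nneseriesD ?lee_fin => [|m m1 _|m m1 _]; [exact: addeACA|exact: P0|exact: Q0].
Qed.

Definition gpZ c P m := spZ c (P m).

Lemma gsumZ c P : (0 <= c)%R -> tail_ge0 P -> gsum (gpZ c P) = c%:E * gsum P.
Proof.
move=> c0 P0; rewrite /gsum /gpZ FZ EFinM; under eq_eseriesr do rewrite FZ EFinM.
rewrite eseries_cond nneseriesZl -?eseries_cond => [|m /andP[_ m1]]; last first.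
  by rewrite lee_fin P0.
by rewrite muleDr // fin_num_adde_defr.
Qed.

Definition gp_drop0 P m := if m is 0%N then spC 0 else P m.

Lemma gsum_drop0 P : gsum (gp_drop0 P) = \sum_(1 <= m <oo) (F (P m))%:E.
Proof. by rewrite /gsum /= F0 add0e; apply: eq_eseries_from => -[]. Qed.

Definition gp_of_sp p m := if m is 0%N then p else spC 0.

Lemma gsum_of_sp p : gsum (gp_of_sp p) = (F p)%:E.
Proof. by rewrite /gsum eseries0 ?adde0 // => -[|m] //= _ _; rewrite F0. Qed.

Fixpoint sp_partial_sum P n :=
  if n is n'.+1 then spD (sp_partial_sum P n') (P n) else P 0%N.

Lemma F_partial_sum P n :
  F (sp_partial_sum P n) = (F (P 0%N) + \sum_(1 <= m < n.+1) F (P m))%R.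
Proof.
elim: n => [|n IH] /=; first by rewrite big_geq // addr0.
by rewrite FD IH [in RHS]big_nat_recr //= addrA.
Qed.

Definition gp_collapse P n m :=
  if m is 0%N then sp_partial_sum P n else if (m <= n)%N then spC 0 else P m.

Lemma tail_ge0_collapse P n : tail_ge0 P -> tail_ge0 (gp_collapse P n).
Proof. by move=> P0 [|m] // _; rewrite /gp_collapse; case: ifP => _; rewrite ?F0 ?P0. Qed.

Lemma tail_collapse P n : tail_ge0 P ->
  \sum_(1 <= m <oo) (F (gp_collapse P n m))%:E = \sum_(n.+1 <= m <oo) (F (P m))%:E.
Proof.
move=> P0; rewrite (nneseries_split 1 n) => [|m m1]; last by rewrite lee_fin tail_ge0_collapse.
rewrite big_nat_cond big1 ?add0e ?add1n => [|[|m] /andP[/andP[_ mn] _]] //; last first.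
  by rewrite /= ifT ?F0.
by apply: eq_eseries_from => -[|m] //= nm; rewrite ifN // -ltnNge.
Qed.

Lemma gsum_collapse P n : tail_ge0 P -> gsum (gp_collapse P n) = gsum P.
Proof.
move=> P0; rewrite /gsum tail_collapse //= F_partial_sum.
by rewrite [in RHS](nneseries_split 1 n) ?add1n ?EFinD ?sumEFin ?addeA.
Qed.

Definition gp_concat (phi : nat -> nat * nat) (Q : nat -> nat -> simple_portfolio R) m :=
  if m is m'.+1 then Q (phi m').1 (phi m').2.+1 else spC 0.

Lemma gsum_concat phi Q : set_bij [set: nat] [set: nat * nat] phi ->
  (forall k, F (Q k 0%N) = 0%R) -> (forall k, tail_ge0 (Q k)) ->
  gsum (gp_concat phi Q) = \sum_(k <oo) gsum (Q k).
Proof.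
move=> phi_bij Q0 Q_ge0.
rewrite /gsum /= F0 add0e nneseries_shift1 => [|[|m] //= _]; last first.
  by rewrite lee_fin Q_ge0.
rewrite (@nneseries_pair_bij _ phi (fun k i => (F (Q k i.+1))%:E)) // => [|k i]; last first.
  by rewrite lee_fin Q_ge0.
apply: eq_eseriesr => k _; rewrite Q0 add0e nneseries_shift1 // => m m1.
by rewrite lee_fin Q_ge0.
Qed.

End PortfolioSequence.

Section Superhedging.
Variable R : realType.
Variable TS : set (traj R).
Local Open Scope ereal_scope.
Implicit Types (P Q : nat -> simple_portfolio R) (p : simple_portfolio R).
Implicit Types (f g : traj R -> \bar R).

Definition gwealth P S := gsum (fun p => twealth p S) P.

Lemma endowmentE P : endowment P = gsum (@sp_V R) P.
Proof. by []. Qed.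

Lemma superhedgesE P f : superhedges TS P f <-> forall S, TS S -> f S <= gwealth P S.
Proof. by []. Qed.

Lemma gen_tail_ge0_V P : gen_portfolio TS P -> tail_ge0 (@sp_V R) P.
Proof. by move=> genP m m0; case: (genP m m0). Qed.

Lemma gen_tail_ge0_twealth P S : gen_portfolio TS P -> TS S ->
  tail_ge0 (fun p => twealth p S) P.
Proof. by move=> genP TSS m m0; case: (genP m m0) => _; apply. Qed.

Lemma pos_gen P : pos_gen_portfolio TS P -> gen_portfolio TS P.
Proof. by case. Qed.

Lemma gen_gpD P Q : gen_portfolio TS P -> gen_portfolio TS Q -> gen_portfolio TS (gpD P Q).
Proof.
move=> genP genQ m m0; have [VP tP] := genP m m0; have [VQ tQ] := genQ m m0.
by split=> [|S TSS]; rewrite ?twealthD addr_ge0 //; [exact: tP|exact: tQ].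
Qed.

Lemma pos_gpD P Q : pos_gen_portfolio TS P -> pos_gen_portfolio TS Q ->
  pos_gen_portfolio TS (gpD P Q).
Proof.
move=> [genP P0] [genQ Q0]; split=> [|j S TSS]; first exact: gen_gpD.
by rewrite wealthD P0 // Q0 // addr0.
Qed.

Lemma gen_gpZ c P : (0 <= c)%R -> gen_portfolio TS P -> gen_portfolio TS (gpZ c P).
Proof.
move=> c0 genP m m0; have [VP tP] := genP m m0.
by split=> [|S TSS]; rewrite ?twealthZ mulr_ge0 //; exact: tP.
Qed.

Lemma pos_gp_drop0 P : gen_portfolio TS P -> pos_gen_portfolio TS (gp_drop0 P).
Proof. by move=> genP; split=> [[|m] //|j S _]; [exact: genP|exact: wealth_cst]. Qed.

Lemma gen_gp_of_sp p : gen_portfolio TS (gp_of_sp p).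
Proof. by move=> [|m] // _; split=> // S _; rewrite twealth_cst. Qed.

Lemma gen_gp_collapse P n : gen_portfolio TS P -> gen_portfolio TS (gp_collapse P n).
Proof.
move=> genP [|m] // m0; rewrite /gp_collapse; case: ifP => _; last exact: genP.
by split=> // S _; rewrite twealth_cst.
Qed.

Lemma pos_gp_concat phi (Q : nat -> nat -> simple_portfolio R) :
  (forall k, pos_gen_portfolio TS (Q k)) -> pos_gen_portfolio TS (gp_concat phi Q).
Proof.
by move=> posQ; split=> [[|m] // _|j S _]; [exact: (pos_gen (posQ _))|exact: wealth_cst].
Qed.

Lemma gwealthD P Q S : gen_portfolio TS P -> gen_portfolio TS Q -> TS S ->
  gwealth (gpD P Q) S = gwealth P S + gwealth Q S.
Proof.
move=> genP genQ TSS; apply: (gsumD (F := fun p => twealth p S) (fun p q => twealthD p q S));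
  exact: gen_tail_ge0_twealth.
Qed.

Lemma endowmentD P Q : gen_portfolio TS P -> gen_portfolio TS Q ->
  endowment (gpD P Q) = endowment P + endowment Q.
Proof.
by move=> genP genQ; apply: (gsumD (F := @sp_V R) (fun p q => erefl)); exact: gen_tail_ge0_V.
Qed.

Lemma gwealth_drop0 P S : gwealth (gp_drop0 P) S = \sum_(1 <= m <oo) (twealth (P m) S)%:E.
Proof. exact: (gsum_drop0 (F := fun p => twealth p S) (twealth_cst 0 S)). Qed.

Lemma endowment_drop0 P : endowment (gp_drop0 P) = \sum_(1 <= m <oo) (sp_V (P m))%:E.
Proof. exact: (gsum_drop0 (F := @sp_V R) erefl). Qed.

Lemma Ibar_le_endowment P f : pos_gen_portfolio TS P -> superhedges TS P f ->
  Ibar TS f <= endowment P.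
Proof. by move=> posP Pf; apply: ereal_inf_lbound; exists P. Qed.

Lemma sigmabar_le_endowment P f : gen_portfolio TS P -> superhedges TS P f ->
  sigmabar TS f <= endowment P.
Proof. by move=> genP Pf; apply: ereal_inf_lbound; exists P. Qed.

Lemma Ibar_lt f x : Ibar TS f < x ->
  exists P, [/\ pos_gen_portfolio TS P, superhedges TS P f & endowment P < x].
Proof. by move=> /ereal_inf_lt[_ [P [posP [Pf ->]]] Px]; exists P. Qed.

Lemma sigmabar_lt f x : sigmabar TS f < x ->
  exists P, [/\ gen_portfolio TS P, superhedges TS P f & endowment P < x].
Proof. by move=> /ereal_inf_lt[_ [P [genP [Pf ->]]] Px]; exists P. Qed.

Lemma sigmabar_le_Ibar f : sigmabar TS f <= Ibar TS f.
Proof. by apply: ereal_inf_le_tmp => _ [P [[genP _] [Pf ->]]]; exists P. Qed.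

Lemma le_Ibar f g : (forall S, TS S -> f S <= g S) -> Ibar TS f <= Ibar TS g.
Proof.
move=> fg; apply: ereal_inf_le_tmp => _ [P [posP [Pg ->]]]; exists P.
by split=> //; split=> // S TSS; exact: le_trans (fg S TSS) (Pg S TSS).
Qed.

Lemma le_sigmabar f g : (forall S, TS S -> f S <= g S) -> sigmabar TS f <= sigmabar TS g.
Proof.
move=> fg; apply: ereal_inf_le_tmp => _ [P [genP [Pg ->]]]; exists P.
by split=> //; split=> // S TSS; exact: le_trans (fg S TSS) (Pg S TSS).
Qed.

Lemma sigmabarD_lt f g x y : sigmabar TS f < x -> sigmabar TS g < y ->
  sigmabar TS (fun S => f S + g S) < x + y.
Proof.
move=> /sigmabar_lt[P [genP Pf Px]] /sigmabar_lt[Q [genQ Qg Qy]].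
apply: le_lt_trans (sigmabar_le_endowment (gen_gpD genP genQ) _) _.
  by apply/superhedgesE => S TSS; rewrite gwealthD //; apply: leeD; [exact: Pf|exact: Qg].
by rewrite endowmentD //; exact: lteD.
Qed.

Lemma sigmabarZ_lt c f (x : R) : (0 < c)%R -> sigmabar TS f < x%:E ->
  sigmabar TS (fun S => c%:E * f S) < (c * x)%:E.
Proof.
move=> c0 /sigmabar_lt[P [genP Pf Px]].
apply: le_lt_trans (sigmabar_le_endowment (gen_gpZ (ltW c0) genP) _) _.
  apply/superhedgesE => S TSS.
  rewrite /gwealth (gsumZ (F := fun p => twealth p S) (fun c p => twealthZ c p S)) ?(ltW c0) //;
    last exact: gen_tail_ge0_twealth.
  by apply: lee_wpmul2l; [rewrite lee_fin ltW|exact: Pf].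
rewrite endowmentE (gsumZ (F := @sp_V R) (fun c p => erefl)) ?EFinM ?lte_pmul2l ?(ltW c0) //.
exact: gen_tail_ge0_V.
Qed.

Lemma sigmabar_le_twealth p f : (forall S, TS S -> f S <= (twealth p S)%:E) ->
  sigmabar TS f <= (sp_V p)%:E.
Proof.
move=> fp; rewrite -(gsum_of_sp (F := @sp_V R) erefl p).
apply: sigmabar_le_endowment (gen_gp_of_sp p) _; apply/superhedgesE => S TSS.
by rewrite /gwealth (gsum_of_sp (F := fun p => twealth p S) (twealth_cst 0 S)); exact: fp.
Qed.

End Superhedging.

Lemma LOP_nonempty (R : realType) (TS : set (traj R)) : LOP TS -> exists S, TS S.
Proof.
move=> lop; apply: contrapT => TS0.
have : sp_V (spC (0 : R)) = sp_V (spC 1) by apply: lop => S TSS; case: TS0; exists S.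
by move/eqP; rewrite eq_sym oner_eq0.
Qed.

Section Pricing.
Variable R : realType.
Variable TS : set (traj R).
Hypothesis TS_nonempty : exists S, TS S.
Local Open Scope ereal_scope.
Implicit Types (P Q : nat -> simple_portfolio R) (p : simple_portfolio R).
Implicit Types (f g : traj R -> \bar R).

Lemma pos_gen_V0 P : pos_gen_portfolio TS P -> sp_V (P 0%N) = 0%R.
Proof. by move=> [_ P0]; have [S TSS] := TS_nonempty; rewrite -(wealth0 _ S) P0. Qed.

Lemma pos_gen_twealth0 P S : pos_gen_portfolio TS P -> TS S -> twealth (P 0%N) S = 0%R.
Proof. by move=> [_ P0]; exact: P0. Qed.

Lemma pos_endowment_ge0 P : pos_gen_portfolio TS P -> 0 <= endowment P.
Proof.
move=> posP; rewrite /endowment pos_gen_V0 // add0e.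
apply: (tail_sum_ge0 (F := @sp_V R)); exact: gen_tail_ge0_V (pos_gen posP).
Qed.

Lemma Ibar_ge0 f : 0 <= Ibar TS f.
Proof. by apply: le_ereal_inf_tmp => _ [P [posP [_ ->]]]; exact: pos_endowment_ge0. Qed.

Lemma Ibar_fin_num f : Ibar TS f != +oo -> Ibar TS f \is a fin_num.
Proof. by rewrite ge0_fin_numE ?Ibar_ge0 // ltey. Qed.

Lemma IbarD_le f g : Ibar TS (fun S => f S + g S) <= Ibar TS f + Ibar TS g.
Proof.
have Ibar_nNy h : Ibar TS h != -oo by rewrite gt_eqF // (lt_le_trans (ltNyr 0)) // Ibar_ge0.
have [->|/Ibar_fin_num fin_f] := eqVneq (Ibar TS f) +oo; first by rewrite addye ?leey.
have [->|/Ibar_fin_num fin_g] := eqVneq (Ibar TS g) +oo; first by rewrite addey ?leey.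
apply/lee_addgt0Pr => e e0; have e20 : (0 < e / 2)%R by rewrite divr_gt0.
have /Ibar_lt[P [posP Pf Pe]] : Ibar TS f < Ibar TS f + (e / 2)%:E by rewrite lteDl.
have /Ibar_lt[Q [posQ Qg Qe]] : Ibar TS g < Ibar TS g + (e / 2)%:E by rewrite lteDl.
apply: le_trans (Ibar_le_endowment (pos_gpD posP posQ) _) _.
  apply/superhedgesE => S TSS; rewrite (gwealthD (pos_gen posP) (pos_gen posQ) TSS).
  by apply: leeD; [exact: Pf|exact: Qg].
rewrite (endowmentD (pos_gen posP) (pos_gen posQ)) (le_trans (ltW (lteD Pe Qe))) //.
by rewrite addeACA -EFinD -splitr.
Qed.

Lemma Ibar_series_le (F : nat -> traj R -> \bar R) : (forall k S, TS S -> 0 <= F k S) ->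
  Ibar TS (fun S => \sum_(k <oo) F k S) <= \sum_(k <oo) Ibar TS (F k).
Proof.
move=> F_ge0; have [->|sum_fin] := eqVneq (\sum_(k <oo) Ibar TS (F k)) +oo; first exact: leey.
have fin_k k : Ibar TS (F k) \is a fin_num.
  apply: Ibar_fin_num; apply: contra sum_fin => /eqP Fk; apply/eqP.
  by apply: (nneseries_pinfty _ (k := k)) => // n _; exact: Ibar_ge0.
apply/lee_addgt0Pr => e e0.
have /choice[Q hQ] : forall k, exists Q, [/\ pos_gen_portfolio TS Q, superhedges TS Q (F k)
    & endowment Q < Ibar TS (F k) + (e / (2 ^ k.+1)%:R)%:E].
  by move=> k; apply: Ibar_lt; rewrite lteDl // lte_fin divr_gt0 // ltr0n expn_gt0.
have [phi phi_bij] : exists phi : nat -> nat * nat, set_bij [set: nat] [set: nat * nat] phi.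
  have /ppcard_eqP[phi] : ([set: nat] #= [set: nat * nat])%card.
    by rewrite card_eq_sym; exact: card_nat2.
  by exists phi.
have posQ k : pos_gen_portfolio TS (Q k) by have [] := hQ k.
apply: le_trans (Ibar_le_endowment (pos_gp_concat phi posQ) _) _.
  apply/superhedgesE => S TSS.
  rewrite /gwealth (gsum_concat (F := fun p => twealth p S) (twealth_cst 0 S) phi_bij);
    last 2 first.
  - by move=> k; exact: pos_gen_twealth0.
  - by move=> k; exact: gen_tail_ge0_twealth (pos_gen (posQ k)) TSS.
  apply: lee_nneseries => [k _ _|k _]; first exact: F_ge0.
  by have [_ Qk _] := hQ k; exact: Qk.
rewrite endowmentE (gsum_concat (F := @sp_V R) erefl phi_bij); last 2 first.
- by move=> k; exact: pos_gen_V0.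
- by move=> k; exact: gen_tail_ge0_V (pos_gen (posQ k)).
apply: le_trans (epsilon_trick _ (fun k => Ibar_ge0 (F k)) (ltW e0)).
apply: lee_nneseries => [k _ _|k _]; first exact: pos_endowment_ge0.
by have [_ _ /ltW] := hQ k.
Qed.

Hypothesis K : condK TS.

(* (K) applied to [spN (P 0)], the positive part of whose wealth is
   superhedged by the portfolios [P m], [m >= 1]. *)
Lemma Ibar_twealth0_pos_le P : gen_portfolio TS P ->
  (forall S, TS S -> 0 <= gwealth P S) ->
  Ibar TS (fun S => (Num.max (twealth (P 0%N) S) 0)%:E) <=
  (sp_V (P 0%N))%:E + \sum_(1 <= m <oo) (sp_V (P m))%:E.
Proof.
move=> genP P_ge0; rewrite -endowment_drop0 -leeBlDl //.
have := K (spN (P 0%N)); rewrite spN_V EFinN addeC.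
have -> : (fun S => (Num.max (- twealth (spN (P 0%N)) S) 0)%:E) =
          (fun S => (Num.max (twealth (P 0%N) S) 0)%:E).
  by apply/funext => S; rewrite twealthN opprK.
move/le_trans; apply; apply: Ibar_le_endowment (pos_gp_drop0 genP) _.
apply/superhedgesE => S TSS; rewrite gwealth_drop0 twealthN EFin_max ge_max.
apply/andP; split; last exact: tail_sum_ge0 (gen_tail_ge0_twealth genP TSS).
by rewrite EFinN -[X in X <= _]add0e leeBlDr // addeC; exact: P_ge0.
Qed.

Lemma gen_endowment_ge0 P : gen_portfolio TS P -> (forall S, TS S -> 0 <= gwealth P S) ->
  0 <= endowment P.
Proof.
by move=> genP P_ge0; exact: le_trans (Ibar_ge0 _) (Ibar_twealth0_pos_le genP P_ge0).
Qed.

Lemma sigmabar_ge0 f : (forall S, TS S -> 0 <= f S) -> 0 <= sigmabar TS f.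
Proof.
move=> f_ge0; apply: le_ereal_inf_tmp => _ [P [genP [Pf ->]]].
by apply: gen_endowment_ge0 => // S TSS; exact: le_trans (f_ge0 S TSS) (Pf S TSS).
Qed.

Lemma Ibar_le_endowment_tail P f : gen_portfolio TS P -> (forall S, TS S -> 0 <= f S) ->
  superhedges TS P f -> Ibar TS f <= endowment P + \sum_(1 <= m <oo) (sp_V (P m))%:E.
Proof.
move=> genP f_ge0 Pf; have P_ge0 S (TSS : TS S) := le_trans (f_ge0 S TSS) (Pf S TSS).
apply: (@le_trans _ _ (Ibar TS (fun S =>
    (Num.max (twealth (P 0%N) S) 0)%:E + gwealth (gp_drop0 P) S))).
  apply: le_Ibar => S TSS; rewrite gwealth_drop0; apply: le_trans (Pf S TSS) _.
  by apply: leeD2r; rewrite lee_fin le_max lexx.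
apply: le_trans (IbarD_le _ _) _; rewrite /endowment.
apply: leeD; first exact: Ibar_twealth0_pos_le genP P_ge0.
by rewrite -endowment_drop0; apply: Ibar_le_endowment (pos_gp_drop0 genP) _.
Qed.

(* Merging a long enough initial segment of [P] into its 0-th portfolio makes
   the correction term of [Ibar_le_endowment_tail] as small as we like. *)
Lemma Ibar_le_endowment_eps P f (e : R) : gen_portfolio TS P ->
  (forall S, TS S -> 0 <= f S) -> superhedges TS P f -> (0 < e)%R ->
  Ibar TS f <= endowment P + e%:E.
Proof.
move=> genP f_ge0 Pf e0; have V_ge0 := gen_tail_ge0_V genP.
have [s_oo|s_fin] := eqVneq (\sum_(1 <= m <oo) (sp_V (P m))%:E) +oo.
  by rewrite /endowment s_oo addey // addye // leey.
have [n tail_lt] : exists n, \sum_(n.+1 <= m <oo) (sp_V (P m))%:E < e%:E.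
  by apply: nneseries_tail_lt; rewrite ?ltey // => m m0; rewrite lee_fin V_ge0.
have genC := gen_gp_collapse n genP.
have Cf : superhedges TS (gp_collapse P n) f.
  apply/superhedgesE => S TSS.
  rewrite /gwealth (gsum_collapse (F := fun p => twealth p S) (fun p q => twealthD p q S)
    (twealth_cst 0 S)); first exact: Pf.
  exact: gen_tail_ge0_twealth genP TSS.
apply: le_trans (Ibar_le_endowment_tail genC f_ge0 Cf) _.
rewrite endowmentE (gsum_collapse (F := @sp_V R) (fun p q => erefl) erefl) //.
by rewrite (tail_collapse (F := @sp_V R) erefl) //; apply: leeD2l; exact: ltW.
Qed.

Lemma Ibar_sigmabar f : (forall S, TS S -> 0 <= f S) -> Ibar TS f = sigmabar TS f.
Proof.
move=> f_ge0; apply/le_anti; rewrite sigmabar_le_Ibar andbT.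
apply/lee_addgt0Pr => e e0; rewrite -leeBlDr //.
apply: le_ereal_inf_tmp => _ [P [genP [Pf ->]]].
by rewrite leeBlDr //; exact: Ibar_le_endowment_eps.
Qed.

Definition sigR (h : traj R -> R) := sigmabar TS (fun S => (h S)%:E).

Definition is_intK (h : traj R -> R) (u : R) :=
  sigR h = u%:E /\ sigR (fun S => - h S)%R = (- u)%:E.

Lemma sigRD_lt h k (x y : R) : sigR h < x%:E -> sigR k < y%:E ->
  sigR (fun S => h S + k S)%R < (x + y)%:E.
Proof. exact: sigmabarD_lt. Qed.

Lemma sigRD_le h k (x y : R) : sigR h <= x%:E -> sigR k <= y%:E ->
  sigR (fun S => h S + k S)%R <= (x + y)%:E.
Proof.
move=> hx ky; apply/lee_addgt0Pr => e e0; apply/ltW.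
have e20 : (0 < e / 2)%R by rewrite divr_gt0.
rewrite -EFinD {1}(splitr e) addrACA.
by apply: sigRD_lt; [apply: le_lt_trans hx _|apply: le_lt_trans ky _]; rewrite lte_fin ltrDl.
Qed.

Lemma sigRZ_le h (c x : R) : (0 < c)%R -> sigR h <= x%:E ->
  sigR (fun S => c * h S)%R <= (c * x)%:E.
Proof.
move=> c0 hx; apply/lee_addgt0Pr => e e0; apply/ltW; rewrite -EFinD.
have -> : (c * x + e = c * (x + e / c))%R by rewrite mulrDr mulrCA divff ?mulr1 // gt_eqF.
have hxe : sigR h < (x + e / c)%:E.
  by apply: le_lt_trans hx _; rewrite lte_fin ltrDl divr_gt0.
exact: sigmabarZ_lt c0 hxe.
Qed.

Lemma sigR_lower h (u : R) : sigR (fun S => - h S)%R <= (- u)%:E -> u%:E <= sigR h.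
Proof.
move=> hNu; apply/lee_addgt0Pr => e e0; rewrite leNgt; apply/negP => hlt.
have e20 : (0 < e / 2)%R by rewrite divr_gt0.
have : sigR (fun S => h S + - h S)%R < ((u - e) + (- u + e / 2))%:E.
  apply: sigRD_lt; first by rewrite EFinB lteBrDr.
  by apply: le_lt_trans hNu _; rewrite lte_fin ltrDl.
rewrite (_ : (fun S => h S + - h S)%R = fun=> 0%R); last by apply/funext => S; rewrite subrr.
by move/(le_lt_trans (sigmabar_ge0 (fun S _ => lexx 0))); rewrite lte_fin; lra.
Qed.

Lemma is_intK_le h (u : R) : sigR h <= u%:E -> sigR (fun S => - h S)%R <= (- u)%:E ->
  is_intK h u.
Proof.
move=> hu hNu; split; apply/le_anti/andP; split => //; first exact: sigR_lower.
apply: sigR_lower; rewrite opprK (_ : (fun S => - - h S)%R = h) //.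
by rewrite funeqE => S; rewrite opprK.
Qed.

Lemma is_intK_L1K h u : is_intK h u -> L1K TS h.
Proof.
move=> [hu hNu]; exists u; split => //.
by rewrite /sigmaund (_ : sigmabar TS _ = (- u)%:E) -?EFinN ?opprK //; exact: hNu.
Qed.

Lemma is_intK_intK h u : is_intK h u -> intK TS h = u.
Proof. by move=> [hu _]; rewrite /intK -/(sigR h) hu. Qed.

Lemma L1K_is_intK h : L1K TS h -> is_intK h (intK TS h).
Proof.
move=> [r [hr hNr]]; rewrite /intK hr /=; split => //.
by move: hNr; rewrite /sigmaund => /(congr1 oppe); rewrite oppeK.
Qed.

Lemma is_intKN h u : is_intK h u -> is_intK (fun S => - h S)%R (- u)%R.
Proof.
move=> [hu hNu]; split => //.
by rewrite opprK (_ : (fun S => - - h S)%R = h) // funeqE => S; rewrite opprK.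
Qed.

Lemma is_intKD h k u v : is_intK h u -> is_intK k v ->
  is_intK (fun S => h S + k S)%R (u + v)%R.
Proof.
move=> [hu hNu] [kv kNv]; apply: is_intK_le; first by rewrite sigRD_le ?hu ?kv.
rewrite opprD (_ : (fun S => - (h S + k S))%R = (fun S => - h S + - k S)%R).
  by rewrite sigRD_le ?hNu ?kNv.
by rewrite funeqE => S; rewrite opprD.
Qed.

Lemma is_intK_cst (c : R) : is_intK (fun=> c) c.
Proof.
apply: is_intK_le; rewrite /sigR.
  by apply: (sigmabar_le_twealth (p := spC c)) => S _; rewrite twealth_cst.
by apply: (sigmabar_le_twealth (p := spC (- c))) => S _; rewrite twealth_cst.
Qed.

Lemma is_intKZ (c : R) h u : is_intK h u -> is_intK (fun S => c * h S)%R (c * u)%R.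
Proof.
have pos c' h' u' : is_intK h' u' -> (0 < c')%R ->
    is_intK (fun S => c' * h' S)%R (c' * u')%R.
  move=> [hu hNu] c0; apply: is_intK_le; first by rewrite sigRZ_le ?hu.
  rewrite -mulrN (_ : (fun S => - (c' * h' S))%R = (fun S => c' * - h' S)%R).
    by rewrite sigRZ_le ?hNu.
  by rewrite funeqE => S; rewrite mulrN.
move=> hu; have [c_lt0|c_gt0|->] := ltgtP c 0%R; last 2 first.
- exact: pos.
- rewrite mul0r (_ : (fun S => 0 * h S)%R = fun=> 0%R); first exact: is_intK_cst.
  by rewrite funeqE => S; rewrite mul0r.
have := pos (- c)%R _ _ (is_intKN hu); rewrite oppr_gt0 mulrNN => /(_ c_lt0).
rewrite (_ : (fun S => - c * - h S)%R = (fun S => c * h S)%R) //.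
by rewrite funeqE => S; rewrite mulrNN.
Qed.

Lemma is_intK_twealth p : is_intK (twealth p) (sp_V p).
Proof.
apply: is_intK_le; rewrite /sigR; first by apply: sigmabar_le_twealth => S _.
by rewrite -spN_V; apply: sigmabar_le_twealth => S _; rewrite twealthN.
Qed.

Lemma is_intK_ge0 h u : is_intK h u -> (forall S, TS S -> 0 <= h S)%R -> (0 <= u)%R.
Proof.
move=> [hu _] h0; rewrite -lee_fin -hu.
by apply: sigmabar_ge0 => S TSS; rewrite lee_fin h0.
Qed.

Lemma sigR_le_normK h : sigR h <= normK TS h.
Proof.
apply: (@le_trans _ _ (sigmabar TS (fun S => `|h S|%:E))); last exact: sigmabar_le_Ibar.
by apply: le_sigmabar => S _; rewrite lee_fin ler_norm.
Qed.

Lemma is_intK_dist_le h k u v (e : R) : is_intK h u -> is_intK k v ->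
  normK TS (fun S => k S - h S)%R <= e%:E -> (`|u - v| <= e)%R.
Proof.
move=> [hu hNu] [kv kNv] khe.
have kh_le : sigR (fun S => k S - h S)%R <= e%:E := le_trans (sigR_le_normK _) khe.
have hk_le : sigR (fun S => h S - k S)%R <= e%:E.
  apply: le_trans (sigR_le_normK _) (le_trans _ khe).
  by apply: le_Ibar => S _; rewrite distrC.
have v_le : (v <= u + e)%R.
  rewrite -lee_fin -kv (_ : k = (fun S => h S + (k S - h S))%R).
    by apply: sigRD_le; rewrite ?hu.
  by rewrite funeqE => S; rewrite addrC subrK.
have Nv_le : (- v <= - u + e)%R.
  rewrite -lee_fin -kNv (_ : (fun S => - k S)%R = (fun S => - h S + (h S - k S))%R).
    by apply: sigRD_le; rewrite ?hNu.
  by rewrite funeqE => S; rewrite addKr.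
by rewrite ler_norml; apply/andP; split; lra.
Qed.

Lemma is_intK_cvg h u (hn : nat -> traj R -> R) (un : nat -> R) :
  is_intK h u -> (forall n, is_intK (hn n) (un n)) ->
  normK TS (fun S => hn n S - h S)%R @[n --> \oo] --> 0 -> un n @[n --> \oo] --> u.
Proof.
move=> hu hnu cvg0; apply/cvgrPdist_le => e e0.
have e0' : 0 < e%:E by rewrite lte_fin.
have [N _ small] := cvg0 _ (open_ereal_lt' e0').
by exists N => // n Nn; exact: is_intK_dist_le hu (hnu n) (ltW (small n Nn)).
Qed.

(* [v] is nonnegative with [Ibar v = 0] (it is [h] plus something supported
   by the null set [A]) and positive on [A] and on [h <> 0], so the indicator
   of their union is below the series [sum_k v]. *)
Lemma is_intK_ae_eq0 h : is_intK h 0 -> ae TS (fun S => 0 <= h S)%R ->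
  ae TS (fun S => h S = 0%R).
Proof.
move=> [h0 _] [A [nullA hA]].
pose v S : R := (if S \in A then 1 else h S)%R.
have v_ge0 S : TS S -> (0 <= v S)%R.
  move=> TSS; rewrite /v; case: ifPn => // /negP nAS.
  by apply: hA => // AS; apply: nAS; exact: mem_set.
have Ibar_v : Ibar TS (fun S => (v S)%:E) <= 0.
  rewrite Ibar_sigmabar => [|S TSS]; last by rewrite lee_fin v_ge0.
  apply/lee_addgt0Pr => e e0; rewrite add0e; apply/ltW.
  have e20 : (0 < e / 2)%R by rewrite divr_gt0.
  apply: (@le_lt_trans _ _ (sigmabar TS (fun S => (h S)%:E + \sum_(k <oo) (\1_A S)%:E))).
    apply: le_sigmabar => S TSS; rewrite /v; case: ifPn => [AS|_]; last first.
      by rewrite leeDl // nneseries_ge0 // => k _ _; rewrite lee_fin indicE.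
    by rewrite indicE AS nneseries_cst_pinfty ?ltr0n // addey // leey.
  rewrite (splitr e) EFinD; apply: sigmabarD_lt; first by rewrite -/(sigR h) h0 lte_fin.
  apply: (le_lt_trans (sigmabar_le_Ibar TS _)).
  apply: (le_lt_trans (Ibar_series_le (F := fun _ S => (\1_A S)%:E) _)) => [k S _|].
    by rewrite lee_fin indicE.
  by rewrite eseries0 ?lte_fin // => k _ _; exact: nullA.
exists (fun S => A S \/ h S <> 0%R); split; last by move=> S _ /not_orP[_ /contrapT].
apply/le_anti; rewrite Ibar_ge0 andbT.
apply: le_trans (le_Ibar (g := fun S => \sum_(k <oo) (v S)%:E) _) _ => [S TSS|].
  rewrite indicE; case: (boolP (S \in _)) => [/set_mem BS|_].
    2: by apply: nneseries_ge0 => k _ _; rewrite lee_fin v_ge0.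
  rewrite nneseries_cst_pinfty ?leey // lt_neqAle v_ge0 // andbT eq_sym /v.
  case: ifPn => [_|/negP nAS]; first exact: oner_neq0.
  by case: BS => [AS|/eqP //]; case: nAS; exact: mem_set.
apply: le_trans (Ibar_series_le _) _ => [k S TSS|]; first by rewrite lee_fin v_ge0.
by rewrite eseries0 // => k _ _; apply/le_anti; rewrite Ibar_v Ibar_ge0.
Qed.

Lemma is_intK_ae_eq h k u : is_intK h u -> is_intK k u ->
  ae TS (fun S => k S <= h S)%R -> ae TS (fun S => h S = k S).
Proof.
move=> hu ku [A [nullA hA]].
have := is_intKD hu (is_intKN ku); rewrite subrr => /is_intK_ae_eq0[|B [nullB hB]].
  by exists A; split=> // S TSS nAS; rewrite subr_ge0; exact: hA.
by exists B; split=> // S TSS nBS; apply/subr0_eq; exact: hB.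
Qed.

End Pricing.

Theorem theorem4p3 (R : realType) (s0 : R) (TS : set (traj R)) :
  trajectory_set s0 TS -> LOP TS -> condK TS ->
  (* L^1_(K) is a vector space *)
  [/\ L1K TS (fun _ => 0),
      (forall f g, L1K TS f -> L1K TS g -> L1K TS (fun S => f S + g S)),
      (forall (c : R) f, L1K TS f -> L1K TS (fun S => c * f S)) &
  (* containing E *)
      (forall p : simple_portfolio R, L1K TS (twealth p))] /\
  (* int_(K) extends I *)
  (forall p : simple_portfolio R, intK TS (twealth p) = sp_V p) /\
  (* linear *)
  (forall f g, L1K TS f -> L1K TS g ->
     intK TS (fun S => f S + g S) = intK TS f + intK TS g) /\
  (forall (c : R) f, L1K TS f -> intK TS (fun S => c * f S) = c * intK TS f) /\
  (* positive *)
  (forall f, L1K TS f -> (forall S, TS S -> 0 <= f S) -> 0 <= intK TS f) /\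
  (* constant-preserving *)
  (forall c : R, intK TS (fun _ => c) = c) /\
  (* continuity w.r.t. ||.|| *)
  (forall (f : traj R -> R) (fn : nat -> traj R -> R),
     L1K TS f -> (forall n, L1K TS (fn n)) ->
     normK TS (fun S => fn n S - f S) @[n --> \oo] --> 0%E ->
     intK TS (fn n) @[n --> \oo] --> intK TS f) /\
  (* strictly positive *)
  (forall f g, L1K TS f -> L1K TS g ->
     ae TS (fun S => g S <= f S) -> intK TS f = intK TS g ->
     ae TS (fun S => f S = g S)).
Proof.
move=> _ /LOP_nonempty TSn0 K.
split; first split.
- exact: is_intK_L1K (is_intK_cst TSn0 K 0).
- by move=> f g /L1K_is_intK hf /L1K_is_intK hg; exact: is_intK_L1K (is_intKD TSn0 K hf hg).
- by move=> c f /L1K_is_intK hf; exact: is_intK_L1K (is_intKZ TSn0 K c hf).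
- by move=> p; exact: is_intK_L1K (is_intK_twealth TSn0 K p).
split; first by move=> p; exact: is_intK_intK (is_intK_twealth TSn0 K p).
split.
  by move=> f g /L1K_is_intK hf /L1K_is_intK hg; exact: is_intK_intK (is_intKD TSn0 K hf hg).
split; first by move=> c f /L1K_is_intK hf; exact: is_intK_intK (is_intKZ TSn0 K c hf).
split; first by move=> f /L1K_is_intK hf; exact (is_intK_ge0 TSn0 K hf).
split; first by move=> c; exact: is_intK_intK (is_intK_cst TSn0 K c).
split.
  by move=> f fn /L1K_is_intK hf hfn; exact: is_intK_cvg hf (fun n => L1K_is_intK (hfn n)).
move=> f g /L1K_is_intK hf /L1K_is_intK hg fg efg; rewrite efg in hf.
exact (is_intK_ae_eq TSn0 K hf hg fg).
Qed.
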